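(* Let $f\colon G\to H$ be an epimorphism between graphs. Then there are a graph $M$ and epimorphisms $m\colon G\to M$ and $l\colon M\to H$ such that $f=l\circ m$, $m$ is monotone and $l$ is light.
   Context: A graph is a pair $A=(V(A),E(A))$ with $E(A)\subseteq V(A)^2$ reflexive and symmetric. An epimorphism is a map on vertices sending edges to edges that is surjective on vertices and on edges. A set $S\subseteq V(G)$ is disconnected if $S=P\cup Q$ with $P,Q$ nonempty disjoint and no edge of $G$ between $P$ and $Q$; otherwise connected. An epimorphism is monotone if the preimage of every connected set is connected. An epimorphism $f\colon G\to H$ is light if for every $h\in V(H)$ and distinct $a,b\in f^{-1}(h)$ we have $\langle a,b\rangle\notin E(G)$. *)

Record graph := Graph {
  V : Type;
  E : V -> V -> Prop;
  E_refl : forall x, E x x;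
  E_sym : forall x y, E x y -> E y x
}.

Definition homomorphism {G H : graph} (f : V G -> V H) : Prop :=
  forall a b, E G a b -> E H (f a) (f b).

Definition epimorphism {G H : graph} (f : V G -> V H) : Prop :=
  homomorphism f /\
  (forall h, exists g, f g = h) /\
  (forall h1 h2, E H h1 h2 -> exists g1 g2, E G g1 g2 /\ f g1 = h1 /\ f g2 = h2).

Definition disconnected {G : graph} (S : V G -> Prop) : Prop :=
  exists P Q : V G -> Prop,
    (forall x, S x <-> (P x \/ Q x)) /\
    (exists x, P x) /\ (exists y, Q y) /\
    (forall x, ~ (P x /\ Q x)) /\
    (forall x y, P x -> Q y -> ~ E G x y).

Definition connected {G : graph} (S : V G -> Prop) : Prop := ~ disconnected S.

Definition monotone {G H : graph} (f : V G -> V H) : Prop :=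
  epimorphism f /\
  forall S : V H -> Prop, connected S -> connected (fun x => S (f x)).

Definition light {G H : graph} (f : V G -> V H) : Prop :=
  epimorphism f /\
  forall h (a b : V G), f a = h -> f b = h -> a <> b -> ~ E G a b.

(* Contract every edge of G whose endpoints have the same image under f: the
   vertices of M are the components of the fibres of f, m is the quotient map
   and l is induced by f.  Since the fibres of m are connected, every
   disconnection of a preimage of m is a union of fibres and descends to M, so
   m is monotone; and an edge of M inside a fibre of l would come from an edge
   of G inside a fibre of f, which has been contracted, so l is light. *)

From Stdlib Require Import Relations ClassicalEpsilon FunctionalExtensionality
  PropExtensionality ProofIrrelevance.

Lemma factor_through_surjection {A B C : Type} (m : A -> B) (f : A -> C) :
  (forall b, exists a, m a = b) ->
  (forall a a', m a = m a' -> f a = f a') ->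
  exists l : B -> C, forall a, f a = l (m a).
Proof.
  intros m_surj f_const.
  exists (fun b => f (proj1_sig (constructive_indefinite_description _ (m_surj b)))).
  intro a.
  destruct (constructive_indefinite_description _ (m_surj (m a))) as [a' e]; simpl.
  apply f_const; congruence.
Qed.

Lemma epimorphism_factor {G M H : graph} (m : V G -> V M) (l : V M -> V H)
    (f : V G -> V H) :
  epimorphism m -> epimorphism f -> (forall x, f x = l (m x)) -> epimorphism l.
Proof.
  intros (m_hom & _ & m_edges) (f_hom & f_surj & f_edges) f_eq.
  split; [| split].
  - intros C D hCD.
    destruct (m_edges C D hCD) as (x & y & hxy & <- & <-).
    rewrite <- !f_eq; auto.
  - intro h. destruct (f_surj h) as [x <-]. exists (m x); auto.
  - intros h1 h2 h12. destruct (f_edges h1 h2 h12) as (x & y & hxy & <- & <-).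
    exists (m x), (m y). rewrite !f_eq. auto.
Qed.

Lemma light_of_factor {G M H : graph} (m : V G -> V M) (l : V M -> V H) :
  epimorphism m -> epimorphism l ->
  (forall x y, E G x y -> l (m x) = l (m y) -> m x = m y) -> light l.
Proof.
  intros (_ & _ & m_edges) l_epi fibre_edges.
  split; [exact l_epi |].
  intros h C D eC eD neq hCD.
  destruct (m_edges C D hCD) as (x & y & hxy & <- & <-).
  apply neq, fibre_edges; congruence.
Qed.

Lemma disconnected_of_saturated_split {G M : graph} (m : V G -> V M)
    (S : V M -> Prop) (P Q : V G -> Prop) :
  epimorphism m ->
  (forall x, S (m x) <-> P x \/ Q x) ->
  (exists x, P x) -> (exists y, Q y) ->
  (forall x, ~ (P x /\ Q x)) ->
  (forall x y, P x -> Q y -> ~ E G x y) ->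
  (forall x y, m x = m y -> P x -> P y) ->
  disconnected S.
Proof.
  intros (_ & m_surj & m_edges) cover [x0 Px0] [y0 Qy0] disj no_edge P_sat.
  assert (Q_sat : forall x y, m x = m y -> Q x -> Q y).
  { intros x y exy Qx.
    assert (Sy : S (m y)) by (rewrite <- exy; apply cover; auto).
    destruct (proj1 (cover y) Sy) as [Py | Qy]; auto.
    exfalso. apply (disj x). split; auto. apply (P_sat y x); auto. }
  exists (fun C => exists x, m x = C /\ P x), (fun C => exists x, m x = C /\ Q x).
  split; [| split; [| split; [| split]]].
  - intro C. destruct (m_surj C) as [x <-]. rewrite cover. split.
    + intros [Px | Qx]; eauto.
    + intros [(y & e & Py) | (y & e & Qy)]; [left; apply (P_sat y) | right; apply (Q_sat y)]; auto.
  - eauto.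
  - eauto.
  - intros C ((x & <- & Px) & (y & e & Qy)). apply (disj x). split; auto.
    apply (Q_sat y); auto.
  - intros C D (x & <- & Px) (y & <- & Qy) hCD.
    destruct (m_edges _ _ hCD) as (u & v & huv & eu & ev).
    apply (no_edge u v); auto; [apply (P_sat x) | apply (Q_sat y)]; auto.
Qed.

Section Contraction.
Variables (G : graph) (contracted : relation (V G)).

Definition linked : relation (V G) := clos_refl_sym_trans _ contracted.

Definition contract_vertex : Type := { C : V G -> Prop | exists x, C = linked x }.

Definition contract_edge (C D : contract_vertex) : Prop :=
  exists x y, proj1_sig C x /\ proj1_sig D y /\ E G x y.

Lemma contract_edge_refl C : contract_edge C C.
Proof.
  destruct C as [C [x ->]].
  exists x, x. repeat split; [apply rst_refl | apply rst_refl | apply E_refl].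
Qed.

Lemma contract_edge_sym C D : contract_edge C D -> contract_edge D C.
Proof.
  intros (x & y & Cx & Dy & hxy). exists y, x. repeat split; auto. apply E_sym; auto.
Qed.

Definition contract : graph := Graph contract_vertex contract_edge contract_edge_refl
  contract_edge_sym.

Definition contract_map (x : V G) : V contract := exist _ (linked x) (ex_intro _ x eq_refl).

Lemma contract_map_eq x y : contract_map x = contract_map y <-> linked x y.
Proof.
  destruct (clos_rst_is_equiv _ contracted) as [_ linked_trans linked_sym].
  split.
  - intro e. apply (f_equal (@proj1_sig _ _)) in e. simpl in e.
    rewrite e. apply rst_refl.
  - intro hxy. apply subset_eq_compat.
    apply functional_extensionality; intro z; apply propositional_extensionality.
    split; intro h; [apply (linked_trans y x); auto | apply (linked_trans x y); auto].
Qed.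

Lemma contract_map_class (C : V contract) x : proj1_sig C x -> contract_map x = C.
Proof.
  destruct C as [C [y ->]]. intro hyx. simpl in hyx.
  transitivity (contract_map y); [apply contract_map_eq, rst_sym, hyx | reflexivity].
Qed.

Lemma contract_map_epi : epimorphism contract_map.
Proof.
  split; [| split].
  - intros x y hxy. exists x, y. repeat split; [apply rst_refl | apply rst_refl | exact hxy].
  - intros [C [x ->]]. exists x. reflexivity.
  - intros C D (x & y & Cx & Dy & hxy).
    exists x, y. repeat split; auto; apply contract_map_class; auto.
Qed.

Hypothesis contracted_edge : forall x y, contracted x y -> E G x y.

Lemma split_part_linked_closed (S : V contract -> Prop) (P Q : V G -> Prop) :
  (forall x, S (contract_map x) <-> P x \/ Q x) ->
  (forall x y, P x -> Q y -> ~ E G x y) ->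
  forall x y, linked x y -> P x -> P y.
Proof.
  intros cover no_edge x y hxy.
  induction (clos_rst_rst1n _ _ _ _ hxy) as [x | x z y hxz hzy IH]; intro Px; auto.
  assert (linked_xz : linked x z) by (destruct hxz; [apply rst_step | apply rst_sym, rst_step]; auto).
  apply IH; [apply clos_rst1n_rst, hzy |].
  assert (Sz : S (contract_map z)).
  { rewrite <- (proj2 (contract_map_eq x z) linked_xz). apply cover; auto. }
  destruct (proj1 (cover z) Sz) as [Pz | Qz]; auto.
  exfalso. apply (no_edge x z); auto.
  destruct hxz; [| apply E_sym]; auto.
Qed.

Lemma contract_map_monotone : monotone contract_map.
Proof.
  split; [exact contract_map_epi |].
  intros S S_conn (P & Q & cover & P_ne & Q_ne & disj & no_edge).
  apply S_conn.
  apply (disconnected_of_saturated_split contract_map S P Q contract_map_epi); auto.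
  intros x y exy. apply (split_part_linked_closed S P Q); auto.
  apply contract_map_eq; exact exy.
Qed.

End Contraction.

Lemma linked_in_fibre {G : graph} {B : Type} (contracted : relation (V G)) (f : V G -> B) :
  (forall x y, contracted x y -> f x = f y) ->
  forall x y, linked G contracted x y -> f x = f y.
Proof. intros f_const x y hxy. induction hxy; auto; congruence. Qed.

Theorem proposition4p14 (G H : graph) (f : V G -> V H) :
  epimorphism f ->
  exists (M : graph) (m : V G -> V M) (l : V M -> V H),
    epimorphism m /\ epimorphism l /\
    (forall x, f x = l (m x)) /\
    monotone m /\ light l.
Proof.
  intro f_epi.
  set (fibre_edge := fun x y => E G x y /\ f x = f y).
  set (m := contract_map G fibre_edge).
  assert (m_mono : monotone m) by (apply contract_map_monotone; intros x y []; auto).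
  assert (m_epi : epimorphism m) by apply m_mono.
  destruct (factor_through_surjection m f) as [l f_eq].
  - apply m_epi.
  - intros x y exy. apply (linked_in_fibre fibre_edge); [intros ? ? []; auto |].
    apply contract_map_eq; exact exy.
  - assert (l_epi : epimorphism l) by (apply (epimorphism_factor m l f); auto).
    exists (contract G fibre_edge), m, l.
    split; [exact m_epi | split; [exact l_epi | split; [exact f_eq | split; [exact m_mono |]]]].
    apply (light_of_factor m l m_epi l_epi).
    intros x y hxy e. apply contract_map_eq, rst_step. split; [exact hxy | congruence].
Qed.
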